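(* Let $C$ be a binary linear $[n,k]$ code (a $k$-dimensional subspace of $\mathbb{F}_2^n$) whose hull $\mathrm{Hull}(C)=C\cap C^{\perp}$ has dimension $\ell$, where $0\le \ell\le k$. Let $G$ be a $k\times n$ generator matrix of $C$ with rows $\mathbf r_1,\dots,\mathbf r_k$, and let $H$ be an $(n-k)\times n$ parity check matrix of $C$ with rows $\mathbf s_1,\dots,\mathbf s_{n-k}$. Suppose $\mathbf x=(x_1,\dots,x_n)\in\mathbb{F}_2^n$ satisfies $\mathbf x\cdot\mathbf x=1$. Put $y_i=\mathbf x\cdot \mathbf r_i$ for $1\le i\le k$ and $z_j=\mathbf x\cdot\mathbf s_j$ for $1\le j\le n-k$. Then: (a) the matrix \[ G_1=\begin{bmatrix} 1 & 0 & x_1\ \cdots\ x_n\\ y_1 & y_1 & \mathbf r_1\\ \vdots & \vdots & \vdots\\ y_k & y_k & \mathbf r_k\end{bmatrix} \] generates a binary linear $[n+2,k+1]$ code $C_1$ whose hull has dimension $\ell+1$; (b) the matrix \[ H_1=\begin{bmatrix} 1 & 0 & x_1\ \cdots\ x_n\\ z_1 & z_1 & \mathbf s_1\\ \vdots & \vdots & \vdots\\ z_{n-k} & z_{n-k} & \mathbf s_{n-k}\end{bmatrix} \] is a parity check matrix for $C_1$.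
   Context: All codes are binary linear codes, with the dual $C^{\perp}=\{\mathbf u\in\mathbb F_2^n : \mathbf u\cdot\mathbf c=0 \text{ for all } \mathbf c\in C\}$ taken with respect to the standard dot product. The hull of $C$ is $\mathrm{Hull}(C)=C\cap C^{\perp}$. A parity check matrix of $C$ is a generator matrix of $C^{\perp}$. The code $C_1$ is called Construction I. *)

From mathcomp Require Import all_boot all_order all_algebra.
Set Implicit Arguments. Unset Strict Implicit. Unset Printing Implicit Defensive.
Import GRing.Theory.
Local Open Scope ring_scope.

(* Binary vectors are row vectors 'rV['F_2]_n; a binary linear code is
   represented by the row space of a matrix (mxalgebra, scope %MS). *)

Definition dot (n : nat) (u v : 'rV['F_2]_n) : 'F_2 := (u *m v^T) 0 0.

(* A matrix whose row space is the dual code C^perp of the code spanned by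
   the rows of A: the row space of kermx A^T is {u | u *m A^T = 0},
   i.e. the vectors orthogonal (dot product) to every row of A. *)
Definition dualmx (m n : nat) (A : 'M['F_2]_(m, n)) : 'M['F_2]_n := kermx A^T.

Definition hullmx (m n : nat) (A : 'M['F_2]_(m, n)) : 'M['F_2]_n :=
  (A :&: dualmx A)%MS.

(* The extended generator of Construction I: first row (1, 0, x), then rows
   (y_i, y_i, r_i) with y_i = x . r_i. *)
Definition constrI (m n : nat) (x : 'rV['F_2]_n) (A : 'M['F_2]_(m, n))
  : 'M['F_2]_(1 + m, 2 + n) :=
  col_mx (row_mx (\row_(j < 2) (if j == 0 :> nat then 1 else 0)) x)
         (row_mx (\matrix_(i < m, j < 2) dot x (row i A)) A).

From mathcomp Require Import all_boot all_order all_algebra.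
Import GRing.Theory.
Local Open Scope ring_scope.

(* Construction I is constrI x A = col_mx e (A *m P), with e = (1, 0, x) and
   P the matrix whose i-th row is (x_i, x_i, e_i). In characteristic 2,
   P *m P^T = 1 and e *m P^T = 0, and x.x = 1 gives e *m e^T = 0; hence the
   Gram matrix of constrI x B against constrI x D is B *m D^T bordered by
   zeros. So e joins the hull, and the lifted parity checks stay orthogonal to
   the lifted code. For ranks, multiplying by [(1, 1, 0)^T | P^T] turns
   constrI x A into diag(1, A), so constrI adds exactly one to the rank. *)

Lemma addrr_F2 (a : 'F_2) : a + a = 0.
Proof. by rewrite addrr_pchar2 // pchar_Fp. Qed.

Lemma addmxx_F2 m n (M : 'M['F_2]_(m, n)) : M + M = 0.
Proof. by apply/matrixP => i j; rewrite !mxE addrr_F2. Qed.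

Section Duality.
Variables (m n : nat) (A : 'M['F_2]_(m, n)).

Lemma sub_dualmx p (B : 'M['F_2]_(p, n)) :
  (B <= dualmx A)%MS = (B *m A^T == 0).
Proof. exact/sub_kermxP/eqP. Qed.

Lemma rank_dualmx : \rank (dualmx A) = (n - \rank A)%N.
Proof. by rewrite mxrank_ker mxrank_tr. Qed.

Lemma rank_hullmx : \rank (hullmx A) = (\rank A - \rank (A *m A^T))%N.
Proof. by rewrite -(mxrank_mul_ker A A^T) addKn. Qed.

Lemma dualmx_eq_rank p (B : 'M['F_2]_(p, n)) :
  (B <= dualmx A)%MS -> \rank B = (n - \rank A)%N -> (B == dualmx A)%MS.
Proof. by move=> sBA rB; rewrite -(mxrank_leqif_eq sBA) rB rank_dualmx. Qed.

End Duality.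

Section ConstructionI.
Variables (n : nat) (x : 'rV['F_2]_n).

Let u : 'rV['F_2]_2 := \row_(j < 2) (if j == 0 :> nat then 1 else 0).
Let one2 : 'rV['F_2]_2 := const_mx 1.

Let u_mulT : u *m u^T = 1%:M.
Proof.
by apply/rowP => i; rewrite ord1 !mxE big_ord_recl big_ord1 !mxE mulr1 mul0r addr0.
Qed.

Let u_mul_oneT : u *m one2^T = 1%:M.
Proof.
by apply/rowP => i; rewrite ord1 !mxE big_ord_recl big_ord1 !mxE mulr1 mul0r addr0.
Qed.

Let one_mul_oneT : one2 *m one2^T = 0.
Proof.
by apply/rowP => i; rewrite ord1 !mxE big_ord_recl big_ord1 !mxE mulr1 addrr_F2.
Qed.

Definition constrI_head : 'rV['F_2]_(2 + n) := row_mx u x.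
Definition constrI_lift : 'M['F_2]_(n, 2 + n) := row_mx (x^T *m one2) 1%:M.

Lemma constrIE m (A : 'M['F_2]_(m, n)) :
  constrI x A = col_mx constrI_head (A *m constrI_lift).
Proof.
rewrite /constrI_lift mul_mx_row mulmx1 mulmxA; congr (col_mx _ (row_mx _ _)).
apply/matrixP => i j; rewrite !mxE big_ord1 !mxE mulr1 /dot mxE.
by apply: eq_bigr => t _; rewrite !mxE mulrC.
Qed.

Lemma constrI_lift_mulT : constrI_lift *m constrI_lift^T = 1%:M.
Proof.
rewrite tr_row_mx mul_row_col trmx1 mulmx1 trmx_mul trmxK.
by rewrite mulmxA -(mulmxA _ one2) one_mul_oneT mulmx0 mul0mx add0r.
Qed.

Lemma constrI_head_mul_liftT : constrI_head *m constrI_lift^T = 0.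
Proof.
rewrite tr_row_mx mul_row_col trmx1 mulmx1 trmx_mul trmxK.
by rewrite mulmxA u_mul_oneT mul1mx addmxx_F2.
Qed.

Lemma rank_constrI m (A : 'M['F_2]_(m, n)) :
  \rank (constrI x A) = (\rank A).+1.
Proof.
pose T := row_mx (col_mx one2^T 0) constrI_lift^T.
have constrI_mul_diag : constrI x A *m T = block_mx 1%:M 0 0 A.
  rewrite constrIE mul_col_row constrI_head_mul_liftT.
  rewrite -(mulmxA A _ constrI_lift^T) constrI_lift_mulT mulmx1 -(mulmxA A).
  rewrite !mul_row_col !mulmx0 !addr0 u_mul_oneT -mulmxA one_mul_oneT.
  by rewrite !mulmx0.
apply/eqP; rewrite eqn_leq; apply/andP; split.
  rewrite constrIE -addsmxE (leq_trans (mxrank_adds_leqif _ _)) //.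
  exact: leq_add (rank_leq_row _) (mxrankM_maxl _ _).
have := mxrankM_maxl (constrI x A) T.
by rewrite constrI_mul_diag rank_diag_block_mx mxrank1.
Qed.

Hypothesis x_mulT : dot x x = 1.

Lemma constrI_head_mulT : constrI_head *m constrI_head^T = 0.
Proof.
have xx : x *m x^T = 1%:M by rewrite [LHS]mx11_scalar -x_mulT.
by rewrite tr_row_mx mul_row_col u_mulT xx addmxx_F2.
Qed.

Lemma constrI_mulT p q (B : 'M['F_2]_(p, n)) (D : 'M['F_2]_(q, n)) :
  constrI x B *m (constrI x D)^T = block_mx 0 0 0 (B *m D^T).
Proof.
have lift_mul_headT : constrI_lift *m constrI_head^T = 0.
  by rewrite -trmx0 -constrI_head_mul_liftT trmx_mul trmxK.
rewrite !constrIE tr_col_mx mul_col_row constrI_head_mulT trmx_mul mulmxA.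
rewrite constrI_head_mul_liftT mul0mx -!(mulmxA B) lift_mul_headT mulmx0.
by rewrite (mulmxA constrI_lift) constrI_lift_mulT mul1mx.
Qed.

End ConstructionI.

Theorem theorem1 (n k l : nat) (G : 'M['F_2]_(k, n)) (H : 'M['F_2]_(n - k, n))
    (x : 'rV['F_2]_n) :
  (k <= n)%N ->
  \rank G = k ->                       (* G generates an [n,k] code C *)
  (l <= k)%N ->
  \rank (hullmx G) = l ->              (* dim Hull(C) = l *)
  \rank H = (n - k)%N ->               (* H has independent rows ... *)
  (H == dualmx G)%MS ->                (* ... spanning C^perp: a parity check matrix *)
  dot x x = 1 ->
  (\rank (constrI x G) = k.+1 /\ \rank (hullmx (constrI x G)) = l.+1) /\
  (\rank (constrI x H) = (n - k).+1 /\ (constrI x H == dualmx (constrI x G))%MS).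
Proof.
move=> le_kn rG _ rhG rH /andP[sHG _] x_mulT.
have rC1 : \rank (constrI x G) = k.+1 by rewrite rank_constrI rG.
split; split => //.
- have le_GGT_k : (\rank (G *m G^T) <= k)%N.
    by have := mxrankM_maxl G G^T; rewrite rG.
  rewrite rank_hullmx constrI_mulT // rank_diag_block_mx mxrank0 rC1 subSn //.
  by rewrite -rhG rank_hullmx rG.
- by rewrite rank_constrI rH.
apply: dualmx_eq_rank; last by rewrite rank_constrI rC1 rH -subSn.
by move: sHG; rewrite !sub_dualmx constrI_mulT // => /eqP->; rewrite block_mx0.
Qed.
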